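(* Let $I,J$ be disjoint subsets of $\{1,\dots,n\}$ and $I',J'$ disjoint subsets of $\{1,\dots,n\}$, let $a_k\in\mathbb{R}$ for $k\in I\cup J$ and $b_k\in\mathbb{R}$ for $k\in I'\cup J'$, and let $\mathscr H=\{x\in\mathbb{R}_{\max}^n:\bigoplus_{i\in I}a_ix_i\le\bigoplus_{j\in J}a_jx_j\}$, $\mathscr H'=\{x\in\mathbb{R}_{\max}^n:\bigoplus_{i\in I'}b_ix_i\le\bigoplus_{j\in J'}b_jx_j\}$. If $I\neq\emptyset$, then $\mathscr H'\subset\mathscr H$ if and only if $I\subset I'$, $J'\subset J$, and $b_j-b_i\le a_j-a_i$ for all $i\in I$ and $j\in J'$.
   Context: $\mathbb{R}_{\max}=\mathbb{R}\cup\{-\infty\}$ with $a\oplus b=\max(a,b)$ and $ab=a+b$; an empty max-plus sum equals $-\infty$. Thus $\bigoplus_{i\in I}a_ix_i=\max_{i\in I}(a_i+x_i)$. *)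

From HB Require Import structures.
From mathcomp Require Import all_boot all_order all_algebra.
From mathcomp Require Import reals.
Set Implicit Arguments. Unset Strict Implicit. Unset Printing Implicit Defensive.
Import Order.TTheory GRing.Theory Num.Theory.
Local Open Scope ring_scope.

(* The max-plus semiring R_max = R ∪ {-oo}, modelled as [option R]
   with [None] standing for -oo. *)
Definition rmax (R : realType) := option R.

Definition mp_add (R : realType) (u v : rmax R) : rmax R :=
  match u, v with
  | None, _ => v
  | _, None => u
  | Some a, Some b => Some (Num.max a b)
  end.

Definition mp_le (R : realType) (u v : rmax R) : bool :=
  match u, v with
  | None, _ => true
  | Some _, None => false
  | Some a, Some b => a <= b
  end.

Definition mp_lin (R : realType) (n : nat) (I : {set 'I_n}) (a : 'I_n -> R)
  (x : 'I_n -> rmax R) : rmax R :=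
  \big[@mp_add R/None]_(i in I) omap (fun t => a i + t) (x i).

Definition mp_halfspace (R : realType) (n : nat) (I J : {set 'I_n})
  (a : 'I_n -> R) (x : 'I_n -> rmax R) : Prop :=
  mp_le (mp_lin I a x) (mp_lin J a x).

(* Sufficiency: a point of H' with x_i finite for some i in I has some j in J'
   with b_i + x_i <= b_j + x_j; then j is in J and a_i + x_i <= a_j + x_j.
   Necessity is read off test points: the point which is 0 at i in I and -oo
   elsewhere lies in H' unless i is in I', and lies outside H; the point which
   is 0 at i in I and b_i - b_j at j in J' (and -oo elsewhere) lies in H', and
   it lies in H only if j is in J and a_i <= a_j + b_i - b_j. *)
From HB Require Import structures.
From mathcomp Require Import all_boot all_order all_algebra.
From mathcomp Require Import reals.
From mathcomp Require Import lra.
Set Implicit Arguments. Unset Strict Implicit. Unset Printing Implicit Defensive.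
Import Order.TTheory GRing.Theory Num.Theory.
Local Open Scope ring_scope.

Section MaxPlusOrder.
Variable R : realType.

Lemma mp_le_trans (u v w : rmax R) : mp_le u v -> mp_le v w -> mp_le u w.
Proof. by case: u; case: v; case: w => //= p q r; apply: le_trans. Qed.

Lemma mp_add_le (u w v : rmax R) :
  mp_le (mp_add u w) v = mp_le u v && mp_le w v.
Proof. by case: u; case: w; case: v => //= *; rewrite ?ge_max ?andbT. Qed.

Lemma mp_le_add (c : R) (u w : rmax R) :
  mp_le (Some c) (mp_add u w) = mp_le (Some c) u || mp_le (Some c) w.
Proof. by case: u; case: w => //= *; rewrite ?le_max ?orbF. Qed.

Lemma mp_big_leP (T : eqType) (r : seq T) (P : pred T) (F : T -> rmax R) v :
  mp_le (\big[@mp_add R/None]_(i <- r | P i) F i) v <->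
  (forall i, i \in r -> P i -> mp_le (F i) v).
Proof.
elim: r => [|x r IH]; first by rewrite big_nil.
have cons_iff : (forall i, i \in x :: r -> P i -> mp_le (F i) v) <->
    (P x -> mp_le (F x) v) /\ (forall i, i \in r -> P i -> mp_le (F i) v).
  split=> [H|[Hx Hr] i]; last by rewrite inE => /predU1P[->|/Hr].
  by split=> [|i ir]; apply: H; rewrite inE ?eqxx ?ir ?orbT.
rewrite cons_iff -IH big_cons; case: (P x); last by split=> [|[]].
by rewrite mp_add_le; split=> [/andP[]|[Fx ->]]; last rewrite Fx.
Qed.

Lemma mp_le_bigP (T : eqType) (r : seq T) (P : pred T) (F : T -> rmax R) c :
  mp_le (Some c) (\big[@mp_add R/None]_(i <- r | P i) F i) <->
  (exists i, [/\ i \in r, P i & mp_le (Some c) (F i)]).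
Proof.
elim: r => [|x r IH]; first by rewrite big_nil; split => // -[i []].
rewrite big_cons; split.
- have lift : (exists i, [/\ i \in r, P i & mp_le (Some c) (F i)]) ->
      exists i, [/\ i \in x :: r, P i & mp_le (Some c) (F i)].
    by move=> [i [ir Pi Fi]]; exists i; rewrite inE ir orbT.
  case: ifP => Px; last by move/IH/lift.
  by rewrite mp_le_add => /orP[Fx|/IH/lift //]; exists x; rewrite mem_head.
- move=> [i [/[!inE] /predU1P[-> Px Fx|ir Pi Fi]]].
    by rewrite Px mp_le_add Fx.
  have IHr : mp_le (Some c) (\big[@mp_add R/None]_(i <- r | P i) F i).
    by apply/IH; exists i.
  by case: ifP => //; rewrite mp_le_add IHr orbT.
Qed.

End MaxPlusOrder.

Section MaxPlusLinearForm.
Variables (R : realType) (n : nat) (a : 'I_n -> R).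

Lemma mp_lin_leP (I : {set 'I_n}) (x : 'I_n -> rmax R) v :
  mp_le (mp_lin I a x) v <->
  (forall i, i \in I -> mp_le (omap (fun t => a i + t) (x i)) v).
Proof.
rewrite /mp_lin mp_big_leP; split=> H i; first by apply: H; rewrite mem_index_enum.
by move=> _; apply: H.
Qed.

Lemma mp_le_linP (I : {set 'I_n}) (x : 'I_n -> rmax R) c :
  mp_le (Some c) (mp_lin I a x) <->
  (exists2 i, i \in I & mp_le (Some c) (omap (fun t => a i + t) (x i))).
Proof.
rewrite /mp_lin mp_le_bigP.
by split=> [[i [_ iI Hi]]|[i iI Hi]]; exists i; rewrite ?mem_index_enum.
Qed.

Lemma mp_le_lin_term (I : {set 'I_n}) (x : 'I_n -> rmax R) i t :
  i \in I -> x i = Some t -> mp_le (Some (a i + t)) (mp_lin I a x).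
Proof. by move=> iI xi; apply/mp_le_linP; exists i; rewrite // xi /=. Qed.

Lemma mp_halfspace_witness (I J : {set 'I_n}) (x : 'I_n -> rmax R) i t :
  mp_halfspace I J a x -> i \in I -> x i = Some t ->
  exists2 j, j \in J & exists2 s, x j = Some s & a i + t <= a j + s.
Proof.
move=> Hx iI xi; have /mp_le_linP[j jJ] := mp_le_trans (mp_le_lin_term iI xi) Hx.
by case xj: (x j) => [s|] // Hs; exists j => //; exists s.
Qed.

End MaxPlusLinearForm.

Section HalfspaceInclusion.
Variables (R : realType) (n : nat) (I J I' J' : {set 'I_n}) (a b : 'I_n -> R).

Lemma mp_halfspace_incl :
  I \subset I' -> J' \subset J ->
  (forall i j, i \in I -> j \in J' -> b j - b i <= a j - a i) ->
  forall x : 'I_n -> rmax R, mp_halfspace I' J' b x -> mp_halfspace I J a x.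
Proof.
move=> /subsetP sII' /subsetP sJ'J Hab x Hx; apply/mp_lin_leP => i iI.
case xi: (x i) => [t|] //.
have [j jJ' [s xj Hle]] := mp_halfspace_witness Hx (sII' i iI) xi.
apply: (mp_le_trans _ (mp_le_lin_term a (sJ'J j jJ') xj)) => /=.
by have := Hab i j iI jJ'; lra.
Qed.

Hypothesis disjIJ : [disjoint I & J].
Hypothesis inclH : forall x : 'I_n -> rmax R,
  mp_halfspace I' J' b x -> mp_halfspace I J a x.

Lemma mp_halfspace_incl_subset : I \subset I'.
Proof.
apply/subsetP => i iI; apply: contraT => iNI'.
pose x k : rmax R := if k == i then Some 0 else None.
have Hx : mp_halfspace I' J' b x.
  apply/mp_lin_leP => k kI'; rewrite /x; case: eqP => // Eki.
  by rewrite -Eki kI' in iNI'.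
have xi : x i = Some 0 by rewrite /x eqxx.
have [j jJ [s]] := mp_halfspace_witness (inclH Hx) iI xi.
by rewrite /x; case: eqP jJ => // ->; rewrite (disjointFr disjIJ iI).
Qed.

Hypothesis disjIJ' : [disjoint I' & J'].

Lemma mp_halfspace_incl_cond i j : i \in I -> j \in J' ->
  j \in J /\ b j - b i <= a j - a i.
Proof.
move=> iI jJ'; have iI' := subsetP mp_halfspace_incl_subset i iI.
have nji : j != i.
  by apply: contraTneq jJ' => ->; rewrite (disjointFr disjIJ' iI').
pose x k : rmax R := if k == i then Some 0
                     else if k == j then Some (b i - b j) else None.
have Hx : mp_halfspace I' J' b x.
  have xj : x j = Some (b i - b j) by rewrite /x (negPf nji) eqxx.
  apply/mp_lin_leP => k kI'; apply: mp_le_trans (mp_le_lin_term b jJ' xj).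
  have nkj : k != j.
    by apply: contraTneq kI' => ->; rewrite (disjointFl disjIJ' jJ').
  by rewrite /x (negPf nkj); case: eqP => //= ->; rewrite addr0 addrC subrK.
have xi : x i = Some 0 by rewrite /x eqxx.
have [k kJ [s]] := mp_halfspace_witness (inclH Hx) iI xi.
rewrite /x; case: eqP kJ => [->|_ kJ]; first by rewrite (disjointFr disjIJ iI).
by case: eqP kJ => // -> jJ [<-] Hle; split=> //; lra.
Qed.

End HalfspaceInclusion.

Theorem lemma3p2 (R : realType) (n : nat) (I J I' J' : {set 'I_n})
  (a b : 'I_n -> R) :
  [disjoint I & J] -> [disjoint I' & J'] -> I != set0 ->
  ((forall x : 'I_n -> rmax R, mp_halfspace I' J' b x -> mp_halfspace I J a x)
   <->
   [/\ I \subset I', J' \subset J &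
       forall i j, i \in I -> j \in J' -> b j - b i <= a j - a i]).
Proof.
move=> disjIJ disjIJ' /set0Pn[i0 i0I]; split; last first.
  by case; exact: mp_halfspace_incl.
move=> inclH; have cond := mp_halfspace_incl_cond disjIJ inclH disjIJ'.
split; first exact: mp_halfspace_incl_subset disjIJ inclH.
- by apply/subsetP => j jJ'; case: (cond i0 j i0I jJ').
- by move=> i j iI jJ'; case: (cond i j iI jJ').
Qed.
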